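(* Let $p\ge 1$ and let $\sigma$ be a permutation of $[n]$ with exactly $p$ non-left-to-right-maxima that belongs to the basis $\mathcal{B}_{p-1}$. Write $\sigma_{k+1}=n$ and assume $k\ge 1$. Let $\pi$ be the permutation of $[k]$ order-isomorphic to $\sigma_1\sigma_2\cdots\sigma_k$. Then $\pi$ has exactly $p-n+k+1$ non-left-to-right-maxima and $\pi$ belongs to the basis $\mathcal{B}_{p-n+k}$.
   Context: A right-jump transforms $\sigma=\sigma_1\cdots\sigma_n$ into $\sigma_1\cdots\sigma_{i-1}\sigma_{i+1}\cdots\sigma_j\sigma_i\sigma_{j+1}\cdots\sigma_n$ for some $1\le i<j\le n$. A left-to-right maximum of $\sigma$ is an entry $\sigma_i$ with $\sigma_k<\sigma_i$ for all $k<i$; every other entry is a non-left-to-right-maximum. A permutation $\pi$ is a pattern of $\sigma$ (written $\pi\prec\sigma$) if some subsequence of $\sigma$ is order-isomorphic to $\pi$. $\mathcal{C}_q$ is the set of all permutations (of any length $n$) obtainable from the identity $12\cdots n$ by at most $q$ right-jumps. The basis $\mathcal{B}_q$ is the set of permutations $\sigma\notin\mathcal{C}_q$ such that every pattern $\pi\prec\sigma$ with $\pi\ne\sigma$ lies in $\mathcal{C}_q$. *)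

(* Permutations of [n] are sequences of naturals that are
   rearrangements of 1..n; positions are 0-indexed internally. *)
From mathcomp Require Import all_boot.
Set Implicit Arguments. Unset Strict Implicit. Unset Printing Implicit Defensive.

Definition is_perm (s : seq nat) : bool := perm_eq s (iota 1 (size s)).

Definition idperm (n : nat) : seq nat := iota 1 n.

(* right-jump with 0-indexed positions i < j (i.e. 1-indexed i+1 < j+1):
   s_1..s_i s_{i+2}..s_{j+1} s_{i+1} s_{j+2}..s_n *)
Definition right_jump (s : seq nat) (i j : nat) : seq nat :=
  take i s ++ drop i.+1 (take j.+1 s) ++ [:: nth 0 s i] ++ drop j.+1 s.

Fixpoint in_C (q : nat) (s : seq nat) : Prop :=
  match q with
  | 0 => s = idperm (size s)
  | q'.+1 => in_C q' s \/
      exists t i j, [/\ i < j, j < size t, in_C q' t & s = right_jump t i j]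
  end.

Definition order_iso (a b : seq nat) : Prop :=
  size a = size b /\
  forall i j, i < size a -> j < size a ->
    (nth 0 a i < nth 0 a j) = (nth 0 b i < nth 0 b j).

Definition pattern (pi sigma : seq nat) : Prop :=
  exists m : bitseq, size m = size sigma /\ order_iso (mask m sigma) pi.

Definition in_basis (q : nat) (sigma : seq nat) : Prop :=
  [/\ is_perm sigma, ~ in_C q sigma &
      forall pi, is_perm pi -> pattern pi sigma -> pi <> sigma -> in_C q pi].

Definition is_lrmax (s : seq nat) (i : nat) : bool :=
  all (fun x => x < nth 0 s i) (take i s).

Definition nlrm (s : seq nat) : nat :=
  count (fun i => ~~ is_lrmax s i) (iota 0 (size s)).

(** A right-jump moves one entry to the right, which creates at most one new
    non-left-to-right maximum; conversely, moving the first entry that is not a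
    left-to-right maximum back in front of the first larger entry is an inverse
    right-jump removing one.  Hence a permutation lies in [C_q] exactly when it
    has at most [q] non-left-to-right maxima.

    Write [sigma = P n S].  Since [n] is a left-to-right maximum and every entry
    of [S] is not one, [nlrm sigma = nlrm P + |S|], and the same holds for
    every pattern of [sigma] keeping [n] and [S].  Minimality of [sigma] applied
    to the patterns [P' n S] with [P'] a proper subsequence of [P] bounds their
    counts by [p - 1]; this yields both [n <= p + k] (take [P'] empty) and the
    basis property of the standardisation [pi] of [P]. *)
From mathcomp Require Import all_boot zify.
Set Implicit Arguments. Unset Strict Implicit. Unset Printing Implicit Defensive.

(* [lr_bound m a] is the least [b >= m] exceeding every entry of [a];
   [nlrm_from m s] is the number of non-left-to-right maxima of [s] when [s]
   is preceded by entries smaller than [m]. *)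
Definition lr_bound (m : nat) (a : seq nat) : nat :=
  foldl (fun m y => maxn m y.+1) m a.

Fixpoint nlrm_from (m : nat) (s : seq nat) : nat :=
  if s is y :: s' then (y < m) + nlrm_from (maxn m y.+1) s' else 0.

Lemma nlrm_from_cat m a b :
  nlrm_from m (a ++ b) = nlrm_from m a + nlrm_from (lr_bound m a) b.
Proof. by elim: a m => [|y a IH] m //=; rewrite IH addnA. Qed.

Lemma lr_bound_maxn m z a : lr_bound (maxn m z) a = maxn (lr_bound m a) z.
Proof. by elim: a m => [|y a IH] m //=; rewrite -IH maxnAC. Qed.

Lemma lr_bound_ge m a : m <= lr_bound m a.
Proof. by elim: a m => [|y a IH] m //=; apply: leq_trans (IH _); apply: leq_maxl. Qed.

Lemma lr_bound_le m a y : (lr_bound m a <= y) = (m <= y) && all (fun x => x < y) a.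
Proof.
elim: a m => [|z a IH] m /=; first by rewrite andbT.
by rewrite IH geq_max andbA.
Qed.

Lemma nlrm_from_mono m m' s : m <= m' -> nlrm_from m s <= nlrm_from m' s.
Proof.
elim: s m m' => [|y s IH] m m' //= le_mm'.
by apply: leq_add; [case: ltnP; case: ltnP => //=; lia | apply: IH; lia].
Qed.

Lemma nlrm_from_small m s : all (fun y => y < m) s -> nlrm_from m s = size s.
Proof.
elim: s => [|y s IH] //= /andP[y_lt s_lt].
by rewrite (maxn_idPl y_lt) IH // y_lt.
Qed.

Lemma nlrm_from_iota m k n : m <= k -> nlrm_from m (iota k n) = 0.
Proof.
elim: n m k => [|n IH] m k le_mk //=.
by rewrite ltnNge le_mk IH //; lia.
Qed.

Lemma nlrmE s : nlrm s = nlrm_from 0 s.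
Proof.
suff count_suffix a : count (fun i => ~~ is_lrmax (a ++ s) i) (iota (size a) (size s))
    = nlrm_from (lr_bound 0 a) s by rewrite /nlrm -[s]cat0s count_suffix.
elim: s a => [|y s IH] a //=.
have -> : is_lrmax (a ++ y :: s) (size a) = (lr_bound 0 a <= y).
  by rewrite /is_lrmax take_size_cat // nth_cat ltnn subnn /= lr_bound_le.
rewrite ltnNge; congr (_ + _).
by have := IH (rcons a y); rewrite cat_rcons size_rcons /lr_bound foldl_rcons.
Qed.

Lemma nlrm_split_max Q n S : all (fun y => y < n) Q -> all (fun y => y <= n) S ->
  nlrm (Q ++ n :: S) = nlrm Q + size S.
Proof.
move=> Q_lt S_le; rewrite !nlrmE nlrm_from_cat /=.
have bound_Q : lr_bound 0 Q <= n by rewrite lr_bound_le Q_lt.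
by rewrite ltnNge bound_Q (maxn_idPr (leqW bound_Q)) (@nlrm_from_small _ S).
Qed.

Lemma right_jumpE a x b c :
  right_jump (a ++ x :: b ++ c) (size a) (size a + size b) = a ++ b ++ x :: c.
Proof.
rewrite /right_jump take_size_cat // nth_cat ltnn subnn /=.
have -> : a ++ x :: b ++ c = (rcons a x ++ b) ++ c by rewrite -catA cat_rcons.
have size_axb : size (rcons a x ++ b) = (size a + size b).+1.
  by rewrite size_cat size_rcons.
by rewrite -size_axb take_size_cat // drop_size_cat ?size_rcons // drop_size_cat.
Qed.

Lemma right_jump_shape t i j : i < j -> j < size t ->
  exists (a : seq nat) x (b c : seq nat),
    [/\ t = a ++ x :: b ++ c, size a = i & size a + size b = j].
Proof.
move=> lt_ij lt_jt.
exists (take i t), (nth 0 t i), (take (j - i) (drop i.+1 t)), (drop (j - i) (drop i.+1 t)).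
split; first by rewrite cat_take_drop -drop_nth ?cat_take_drop //; lia.
  by rewrite size_takel //; lia.
by rewrite size_takel ?size_takel ?size_drop; lia.
Qed.

Lemma nlrm_right_jump a x b c :
  nlrm (a ++ b ++ x :: c) <= (nlrm (a ++ x :: b ++ c)).+1.
Proof.
rewrite !nlrmE !nlrm_from_cat /= nlrm_from_cat lr_bound_maxn.
set m := lr_bound 0 a.
have le_b : nlrm_from m b <= nlrm_from (maxn m x.+1) b by apply/nlrm_from_mono/leq_maxl.
by case: (x < m); case: (x < lr_bound m b) => /=; lia.
Qed.

Lemma nlrm_in_C q s : in_C q s -> nlrm s <= q.
Proof.
elim: q s => [|q IH] s /=.
  by move->; rewrite nlrmE nlrm_from_iota.
case=> [/IH|[t [i [j [lt_ij lt_jt /IH nlrm_t ->]]]]]; first by lia.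
have [a [x [b [c [Et <- <-]]]]] := right_jump_shape lt_ij lt_jt.
move: nlrm_t; rewrite Et right_jumpE => nlrm_t.
by apply: leq_trans (nlrm_right_jump a x b c) _; rewrite ltnS.
Qed.

Lemma in_C_mono q q' s : q <= q' -> in_C q s -> in_C q' s.
Proof.
elim: q' => [|q' IH] le_qq'; first by have -> : q = 0 by lia.
by case: (ltngtP q q'.+1) le_qq' => // [lt_qq' _ /IH s_in|-> _ //]; left; apply: s_in.
Qed.

Lemma first_nonmax m s : 0 < nlrm_from m s ->
  exists a x c, [/\ s = a ++ x :: c, nlrm_from m a = 0 & x < lr_bound m a].
Proof.
elim: s m => [|y s IH] m //=.
case: (ltnP y m) => [y_lt _|le_my /IH [a [x [c [-> a0 x_lt]]]]].
  by exists [::], y, s.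
by exists (y :: a), x, c; rewrite /= ltnNge le_my.
Qed.

Lemma first_larger m a x : nlrm_from m a = 0 -> m <= x -> x < lr_bound m a ->
  x \notin a -> exists a1 y a2, [/\ a = a1 ++ y :: a2, lr_bound m a1 <= x & x < y].
Proof.
elim: a m => [|y a IH] m /=; first by lia.
case: (ltnP y m) => //= le_my a0 le_mx x_lt.
rewrite in_cons negb_or => /andP[x_neq_y x_notin].
case: (ltnP x y) => [lt_xy|le_yx]; first by exists [::], y, a.
have [|a1 [y' [a2 [-> a1_le lt_xy']]]] := IH (maxn m y.+1) a0 _ x_lt x_notin.
  by move: x_neq_y; rewrite geq_max le_mx /=; lia.
by exists (y :: a1), y', a2.
Qed.

(* Undoing the right-jump that carried [x] past [y :: b] removes exactly one
   non-left-to-right maximum. *)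
Lemma nlrm_from_move_back m a x y b c : lr_bound m a <= x -> x < y ->
  nlrm_from m (a ++ (y :: b) ++ x :: c) = (nlrm_from m (a ++ x :: (y :: b) ++ c)).+1.
Proof.
move=> a_le lt_xy; rewrite !nlrm_from_cat /= !nlrm_from_cat /=.
have y_bound := lr_bound_ge y.+1 b.
have -> : maxn (lr_bound m a) y.+1 = y.+1 by lia.
have -> : maxn (maxn (lr_bound m a) x.+1) y.+1 = y.+1 by lia.
have -> : maxn (lr_bound y.+1 b) x.+1 = lr_bound y.+1 b by lia.
lia.
Qed.

Lemma sorted_perm_id s : is_perm s -> sorted leq s -> s = idperm (size s).
Proof.
by move=> s_perm s_sorted; apply: (sorted_eq leq_trans anti_leq s_sorted (iota_sorted _ _)).
Qed.

Lemma nlrm_from0_sorted m s : nlrm_from m s = 0 -> sorted leq s.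
Proof.
elim: s m => [|y [|z s] IH] m //= /eqP; rewrite addn_eq0 => /andP[_ /eqP s0].
have /= := IH _ s0; move: s0 => /= /eqP; rewrite addn_eq0 => /andP[z_ge _] ->.
by rewrite andbT; move: z_ge; rewrite eqb0 -leqNgt geq_max => /andP[_ /ltnW].
Qed.

Lemma in_C_nlrm s : is_perm s -> in_C (nlrm s) s.
Proof.
rewrite nlrmE; move nlrm_s : (nlrm_from 0 s) => q.
elim: q s nlrm_s => [|q IH] s nlrm_s s_perm /=.
  exact/sorted_perm_id/(nlrm_from0_sorted nlrm_s).
right.
have s_uniq : uniq s by rewrite (perm_uniq s_perm) iota_uniq.
have [|a [x [c [Es a0 x_lt]]]] := first_nonmax (m := 0) (s := s); first by rewrite nlrm_s.
have x_notin : x \notin a.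
  by move: s_uniq; rewrite Es cat_uniq /= negb_or => /and3P[_ /andP[]].
have [a1 [y [a2 [Ea a1_le lt_xy]]]] := first_larger a0 (leq0n x) x_lt x_notin.
pose t := a1 ++ x :: (y :: a2) ++ c.
have Es' : s = a1 ++ (y :: a2) ++ x :: c by rewrite Es Ea -catA.
have t_perm : is_perm t.
  have t_s : perm_eq t s by rewrite Es' /t perm_cat2l -cat1s perm_catCA.
  by rewrite /is_perm (perm_size t_s) (perm_trans t_s s_perm).
exists t, (size a1), (size a1 + size (y :: a2)); split.
- by rewrite /=; lia.
- by rewrite /t !size_cat /= size_cat; lia.
- by apply: IH t_perm; move: nlrm_s; rewrite Es' nlrm_from_move_back // => -[].
- by rewrite Es' /t right_jumpE.
Qed.

Lemma in_C_iff q s : is_perm s -> in_C q s <-> nlrm s <= q.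
Proof.
by move=> s_perm; split=> [/nlrm_in_C //|le_q]; apply: in_C_mono le_q (in_C_nlrm s_perm).
Qed.

Lemma in_basis_nlrm q s : in_basis q s -> q < nlrm s.
Proof.
case=> s_perm s_notin _; rewrite ltnNge; apply/negP => le_q.
exact/s_notin/(in_C_iff _ s_perm).
Qed.

Lemma order_iso_mask a b m : order_iso a b -> order_iso (mask m a) (mask m b).
Proof.
move=> [size_ab iso_ab].
have maskE c : mask m c = map (nth 0 c) (mask m (iota 0 (size c))).
  by rewrite map_mask -/(mkseq _ _) mkseq_nth.
rewrite (maskE a) (maskE b) -size_ab; split; first by rewrite !size_map.
move=> i j; rewrite size_map => lt_i lt_j.
have in_range l : l < size (mask m (iota 0 (size a))) ->
    nth 0 (mask m (iota 0 (size a))) l < size a.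
  by move=> /(mem_nth 0) /mem_mask; rewrite mem_iota.
by rewrite !(nth_map 0) // iso_ab ?in_range.
Qed.

Lemma nlrm_order_iso a b : order_iso a b -> nlrm a = nlrm b.
Proof.
move=> [size_ab iso_ab]; rewrite /nlrm -size_ab.
apply: eq_in_count => i; rewrite mem_iota => /andP[_ lt_i] /=; rewrite /is_lrmax.
rewrite -[in take i a](mkseq_nth 0 a) -[in take i b](mkseq_nth 0 b) /mkseq -size_ab.
rewrite -!map_take !take_iota !all_map; congr negb.
by apply: eq_in_all => j; rewrite mem_iota => /andP[_ lt_j] /=; apply: iso_ab; lia.
Qed.

Lemma perm_nthE s i : is_perm s -> i < size s ->
  nth 0 s i = (count (fun j => nth 0 s j < nth 0 s i) (iota 0 (size s))).+1.
Proof.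
move=> s_perm lt_i.
have : nth 0 s i \in iota 1 (size s) by rewrite -(perm_mem s_perm) mem_nth.
rewrite mem_iota; set v := nth 0 s i => v_range.
have count_lt_iota l n : count (fun y => y < v) (iota l n) = minn (v - l) n.
  by elim: n l => [|n IH] l /=; [rewrite minn0 | rewrite IH; case: ltnP; lia].
have -> : count (fun j => nth 0 s j < v) (iota 0 (size s)) = count (fun y => y < v) s.
  by rewrite -[in RHS](mkseq_nth 0 s) count_map.
rewrite (permP s_perm) count_lt_iota; lia.
Qed.

Lemma perm_order_iso_eq a b : is_perm a -> is_perm b -> order_iso a b -> a = b.
Proof.
move=> a_perm b_perm [size_ab iso_ab].
apply: (eq_from_nth (x0 := 0) size_ab) => i lt_i.
rewrite perm_nthE // [RHS]perm_nthE -?size_ab //; congr S.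
by apply: eq_in_count => j; rewrite mem_iota => /andP[_ lt_j]; apply: iso_ab.
Qed.

Definition standardize (u : seq nat) : seq nat :=
  map (fun y => count (fun z => z <= y) u) u.

Lemma count_le_strict (u : seq nat) y1 y2 : y1 < y2 -> y2 \in u ->
  count (fun z => z <= y1) u < count (fun z => z <= y2) u.
Proof.
move=> lt_y12; elim: u => [|z u IH] //=; rewrite in_cons => /orP[/eqP <-|/IH].
  have : count (fun z => z <= y1) u <= count (fun z => z <= y2) u.
    by apply: sub_count => w /= /leq_trans; apply; apply: ltnW.
  by rewrite leqnn; case: leqP; lia.
by case: (leqP z y1); case: (leqP z y2) => //=; lia.
Qed.

Lemma standardize_lt (u : seq nat) y1 y2 : y1 \in u -> y2 \in u ->
  (y1 < y2) = (count (fun z => z <= y1) u < count (fun z => z <= y2) u).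
Proof.
move=> y1_in y2_in; case: (ltnP y1 y2) => [lt_y12|le_y21]; first by rewrite count_le_strict.
by rewrite ltnNge sub_count // => z /= /leq_trans; apply.
Qed.

Lemma standardize_order_iso u : order_iso u (standardize u).
Proof.
split; first by rewrite size_map.
by move=> i j lt_i lt_j; rewrite !(nth_map 0) //; apply: standardize_lt; apply: mem_nth.
Qed.

Lemma standardize_perm u : uniq u -> is_perm (standardize u).
Proof.
move=> u_uniq.
have std_uniq : uniq (standardize u).
  rewrite map_inj_in_uniq // => y1 y2 y1_in y2_in eq_y12.
  have := standardize_lt y1_in y2_in; have := standardize_lt y2_in y1_in.
  by rewrite eq_y12 ltnn => /negbT; rewrite -leqNgt => le_21 /negbT; rewrite -leqNgt => le_12;
    apply/eqP; rewrite eqn_leq le_12 le_21.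
have std_range : {subset standardize u <= iota 1 (size (standardize u))}.
  move=> v /mapP[y y_in ->]; rewrite mem_iota size_map add1n ltnS count_size andbT.
  by rewrite -has_count; apply/hasP; exists y.
have [_ perm_std] := uniq_min_size std_uniq std_range (eq_leq (size_iota _ _)).
by apply: uniq_perm; rewrite ?iota_uniq.
Qed.

Section SplitAtMaximum.

Variables (q k : nat) (sigma : seq nat).
Hypothesis sigma_basis : in_basis q sigma.
Hypothesis lt_k : k < size sigma.
Hypothesis sigma_k : nth 0 sigma k = size sigma.

Let n := size sigma.
Let P := take k sigma.
Let S := drop k.+1 sigma.

Let sigma_perm : is_perm sigma. Proof. by case: sigma_basis. Qed.

Lemma sigma_splitE : sigma = P ++ n :: S.
Proof. by rewrite /P /S /n -sigma_k -drop_nth ?cat_take_drop. Qed.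

Lemma size_prefix : size P = k.
Proof. by rewrite size_takel // ltnW. Qed.

Lemma size_suffix : size S = n - k.+1.
Proof. by rewrite size_drop. Qed.

Let sigma_range x : x \in sigma -> 0 < x <= n.
Proof. by rewrite (perm_mem sigma_perm) mem_iota; lia. Qed.

Lemma prefix_lt Q : {subset Q <= P} -> all (fun y => y < n) Q.
Proof.
have n_notin : n \notin P.
  have := sigma_perm; rewrite /is_perm => /perm_uniq; rewrite iota_uniq sigma_splitE.
  by rewrite cat_uniq /= negb_or => /and3P[_ /andP[]].
move=> sub_QP; apply/allP => x /sub_QP x_in.
have /sigma_range : x \in sigma by rewrite sigma_splitE mem_cat x_in.
have : x != n by apply: contraNneq n_notin => <-.
lia.
Qed.

Lemma suffix_le : all (fun y => y <= n) S.
Proof.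
apply/allP => x x_in.
by have /sigma_range/andP[] // : x \in sigma by rewrite sigma_splitE mem_cat in_cons x_in !orbT.
Qed.

Lemma nlrm_sigma : nlrm sigma = nlrm P + size S.
Proof. by rewrite {1}sigma_splitE nlrm_split_max ?prefix_lt ?suffix_le. Qed.

(* [mask mP P ++ n :: S] is a proper subsequence of [sigma], so its
   standardisation lies in [C_q]. *)
Lemma proper_prefix_pattern mP : size mP = k -> count id mP < k ->
  nlrm (mask mP P) + size S <= q.
Proof.
move=> size_mP count_mP.
set u := mask mP P ++ n :: S.
have mask_u : mask (mP ++ true :: nseq (size S) true) sigma = u.
  by rewrite {1}sigma_splitE mask_cat ?size_mP ?size_prefix //= mask_true ?size_nseq.
have size_u : size u = count id mP + (size S).+1.
  by rewrite size_cat size_mask ?size_mP ?size_prefix.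
have [_ _ minimal] := sigma_basis.
have /nlrm_in_C : in_C q (standardize u).
  apply: minimal.
  - by apply: standardize_perm; rewrite -mask_u mask_uniq // (perm_uniq sigma_perm) iota_uniq.
  - exists (mP ++ true :: nseq (size S) true); split.
      by rewrite size_cat /= size_nseq size_mP size_suffix; lia.
    by rewrite mask_u; apply: standardize_order_iso.
  - by move/(congr1 size); rewrite size_map size_u size_suffix; lia.
rewrite -(nlrm_order_iso (standardize_order_iso u)) nlrm_split_max ?suffix_le //.
by apply: prefix_lt => x /mem_mask.
Qed.

Lemma max_position_bound : 0 < k -> n <= q + k.+1.
Proof.
move=> k_pos; have := proper_prefix_pattern (size_nseq k false).
by rewrite count_nseq mul0n mask_false size_suffix => /(_ k_pos); lia.
Qed.

Variable pi : seq nat.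
Hypothesis pi_perm : is_perm pi.
Hypothesis pi_iso : order_iso pi P.

Lemma prefix_pattern_bound tau : is_perm tau -> pattern tau pi -> tau <> pi ->
  nlrm tau + size S <= q.
Proof.
move=> tau_perm [m [size_m mask_iso]] tau_neq; rewrite -(nlrm_order_iso mask_iso).
have size_pi : size pi = k by rewrite pi_iso.1 size_prefix.
have [count_m|] := ltnP (count id m) k.
  rewrite (nlrm_order_iso (order_iso_mask m pi_iso)).
  by apply: proper_prefix_pattern; rewrite // size_m.
move=> le_k_count; exfalso; apply: tau_neq.
have m_true : m = nseq (size m) true.
  apply/all_pred1P; rewrite (eq_all eqb_id) all_count eqn_leq count_size.
  by rewrite size_m size_pi.
move: mask_iso; rewrite m_true mask_true ?size_m //.
by move=> /(perm_order_iso_eq pi_perm tau_perm) ->.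
Qed.

End SplitAtMaximum.

Theorem mainTheorem6 (p n k : nat) (sigma pi : seq nat) :
  1 <= p ->
  size sigma = n -> is_perm sigma ->
  nlrm sigma = p ->
  in_basis p.-1 sigma ->
  k < n -> nth 0 sigma k = n ->
  1 <= k ->
  is_perm pi -> size pi = k -> order_iso pi (take k sigma) ->
  [/\ n <= p + k, nlrm pi + n = p + k + 1 & in_basis (p + k - n) pi].
Proof.
(* [1 <= p] is redundant: it follows from [in_basis_nlrm]. *)
move=> _ <- _ <- basis lt_k sigma_k k_pos pi_perm size_pi pi_iso.
have lt_nlrm := in_basis_nlrm basis.
have le_n := max_position_bound basis lt_k sigma_k k_pos.
have nlrm_split := nlrm_sigma basis lt_k sigma_k.
have nlrm_pi := nlrm_order_iso pi_iso.
rewrite size_drop in nlrm_split.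
split; [lia | lia | split => //].
- by move/nlrm_in_C; lia.
- move=> tau tau_perm tau_pattern tau_neq; apply/(in_C_iff _ tau_perm).
  have := prefix_pattern_bound basis lt_k sigma_k pi_perm pi_iso tau_perm tau_pattern tau_neq.
  by rewrite size_drop; lia.
Qed.
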